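(* If a PPT three-mode CM $\gamma$ is fully separable, then $$\mathrm{tr}\,N\ge2,\quad \mathrm{tr}\,\tilde N\ge2,\quad \det N>0,\quad \det\tilde N>0.$$
   Context: Conventions: Three modes $A,B,C$, phase-space vectors ordered mode-wise as $(q_A,p_A,q_B,p_B,q_C,p_C)$. $J_1=\begin{pmatrix}0&-1\\1&0\end{pmatrix}$, $J=J_1\oplus J_1\oplus J_1$. A CM of $n$ modes is a real symmetric $2n\times2n$ matrix $\gamma>0$ with $\gamma-iJ\ge0$. $X\ge Y$ means $X-Y$ is positive semidefinite. For $x\in\{A,B,C\}$, $\tilde J_x$ is $J$ with the $2\times2$ diagonal block of mode $x$ replaced by $-J_1$, and $\tilde J_0=J$. A three-mode CM $\gamma$ is called PPT if $\gamma\ge i\tilde J_x$ for all $x\in\{0,A,B,C\}$, and fully separable if there exist one-mode CMs $\gamma_A,\gamma_B,\gamma_C$ with $\gamma\ge\gamma_A\oplus\gamma_B\oplus\gamma_C$. Write $\gamma=\begin{pmatrix}A&C\\C^T&B\end{pmatrix}$ with $A$ the $2\times2$ block of mode $A$, $B$ the $4\times4$ block of modes $B,C$, $C$ the $2\times4$ off-diagonal block; let $J_{BC}=J_1\oplus J_1$, $\tilde J_{BC}=J_1\oplus(-J_1)$, and define the (Hermitian, possibly complex) $2\times2$ matrices $$N=A-C(B-iJ_{BC})^{-1}C^T,\qquad \tilde N=A-C(B-i\tilde J_{BC})^{-1}C^T,$$ where the inverses are Moore–Penrose pseudoinverses (inversion on the range); these are well defined because $\ker(B-iJ_{BC}),\ker(B-i\tilde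 J_{BC})\subseteq\ker C$ for PPT $\gamma$. *)

From HB Require Import structures.
From mathcomp Require Import all_boot all_order all_algebra.
From mathcomp Require Import complex.
From Stdlib Require Import ClassicalEpsilon.
Set Implicit Arguments. Unset Strict Implicit. Unset Printing Implicit Defensive.
Import Order.TTheory GRing.Theory Num.Theory.
Local Open Scope ring_scope.

Section Defs.
Variable R : rcfType.
Local Notation C := R[i].

Definition iC : C := Complex 0 1.

Definition cmx {m n} (X : 'M[R]_(m, n)) : 'M[C]_(m, n) := map_mx (real_complex R) X.

Definition adjm {m n} (X : 'M[C]_(m, n)) : 'M[C]_(n, m) := (map_mx (@conjc R) X)^T.

Definition dsum {T : nmodType} {m n} (X : 'M[T]_m) (Y : 'M[T]_n) : 'M[T]_(m + n) :=
  block_mx X 0 0 Y.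

Definition psdR {n} (X : 'M[R]_n) : Prop :=
  forall v : 'cV[R]_n, 0 <= (v^T *m X *m v) 0 0.
Definition pdR {n} (X : 'M[R]_n) : Prop :=
  forall v : 'cV[R]_n, v != 0 -> 0 < (v^T *m X *m v) 0 0.

(* complex (Hermitian) positive semidefinite: v^* X v is real and >= 0 for all v *)
Definition psdC {n} (X : 'M[C]_n) : Prop :=
  forall v : 'cV[C]_n, 0 <= (adjm v *m X *m v) 0 0.

Definition J1 : 'M[R]_2 :=
  \matrix_(i < 2, j < 2)
    (if (val i == 0%N) && (val j == 1%N) then -1
     else if (val i == 1%N) && (val j == 0%N) then 1 else 0).

(* three modes ordered A, B, C : phase space R^(2 + (2 + 2)) *)
Definition J3 : 'M[R]_(2 + (2 + 2)) := dsum J1 (dsum J1 J1).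

Inductive ptx := P0 | PA | PB | PC.

Definition Jt (x : ptx) : 'M[R]_(2 + (2 + 2)) :=
  match x with
  | P0 => J3
  | PA => dsum (- J1) (dsum J1 J1)
  | PB => dsum J1 (dsum (- J1) J1)
  | PC => dsum J1 (dsum J1 (- J1))
  end.

Definition isCM {n} (J : 'M[R]_n) (g : 'M[R]_n) : Prop :=
  g^T = g /\ pdR g /\ psdC (cmx g - iC *: cmx J).

Definition isCM3 (g : 'M[R]_(2 + (2 + 2))) : Prop := isCM J3 g.
Definition isCM1 (g : 'M[R]_2) : Prop := isCM J1 g.

Definition PPT (g : 'M[R]_(2 + (2 + 2))) : Prop :=
  forall x : ptx, psdC (cmx g - iC *: cmx (Jt x)).

Definition fully_separable (g : 'M[R]_(2 + (2 + 2))) : Prop :=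
  exists gA gB gC : 'M[R]_2,
    [/\ isCM1 gA, isCM1 gB, isCM1 gC & psdR (g - dsum gA (dsum gB gC))].

(* Moore--Penrose pseudoinverse: the (unique) P satisfying the Penrose equations *)
Definition penrose {n} (X P : 'M[C]_n) : Prop :=
  [/\ X *m P *m X = X, P *m X *m P = P,
      adjm (X *m P) = X *m P & adjm (P *m X) = P *m X].

Definition mpinv {n} (X : 'M[C]_n) : 'M[C]_n :=
  epsilon (inhabits 0) (fun P => penrose X P).

(* blocks: A (mode A), B (modes B,C), C (off-diagonal) *)
Definition blkA (g : 'M[R]_(2 + (2 + 2))) : 'M[R]_2 := ulsubmx g.
Definition blkB (g : 'M[R]_(2 + (2 + 2))) : 'M[R]_(2 + 2) := drsubmx g.
Definition blkC (g : 'M[R]_(2 + (2 + 2))) : 'M[R]_(2, 2 + 2) := ursubmx g.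

Definition JBC : 'M[R]_(2 + 2) := dsum J1 J1.
Definition JtBC : 'M[R]_(2 + 2) := dsum J1 (- J1).

Definition Nmat (g : 'M[R]_(2 + (2 + 2))) : 'M[C]_2 :=
  cmx (blkA g) - cmx (blkC g) *m mpinv (cmx (blkB g) - iC *: cmx JBC) *m cmx (blkC g)^T.
Definition Ntmat (g : 'M[R]_(2 + (2 + 2))) : 'M[C]_2 :=
  cmx (blkA g) - cmx (blkC g) *m mpinv (cmx (blkB g) - iC *: cmx JtBC) *m cmx (blkC g)^T.

End Defs.

(* N is the Schur complement of the (B,C)-block in gamma - iJ, so gamma - iJ >= 0
   gives N - iJ1 >= 0, and gamma - i~J_A >= 0 (the same matrix with the sign of the
   A-block flipped) gives N + iJ1 >= 0.  Likewise ~N inherits ~N - iJ1 >= 0 from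
   gamma - i~J_C >= 0 and ~N + iJ1 >= 0 from the complex conjugate of
   gamma - i~J_B >= 0.  A 2x2 matrix H with H +- iJ1 >= 0 is Hermitian with
   tr H >= 2 and det H >= 1. *)

From HB Require Import structures.
From mathcomp Require Import all_boot all_order all_algebra.
From mathcomp Require Import complex.
From mathcomp Require Import ring lra.
From Stdlib Require Import ClassicalEpsilon.
Import Order.TTheory GRing.Theory Num.Theory.
Local Open Scope ring_scope.
Set Implicit Arguments. Unset Strict Implicit. Unset Printing Implicit Defensive.

Section ConjugateTranspose.
Variable R : rcfType.
Local Notation C := R[i].

Lemma adjmK m n (X : 'M[C]_(m, n)) : adjm (adjm X) = X.
Proof. by apply/matrixP=> i j; rewrite !mxE conjcK. Qed.

Lemma adjmM m n p (A : 'M[C]_(m, n)) (B : 'M[C]_(n, p)) :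
  adjm (A *m B) = adjm B *m adjm A.
Proof. by rewrite /adjm map_mxM trmx_mul. Qed.

Lemma adjmD m n (A B : 'M[C]_(m, n)) : adjm (A + B) = adjm A + adjm B.
Proof. by apply/matrixP=> i j; rewrite !mxE rmorphD. Qed.

Lemma adjmN m n (A : 'M[C]_(m, n)) : adjm (- A) = - adjm A.
Proof. by apply/matrixP=> i j; rewrite !mxE rmorphN. Qed.

Lemma adjmZ m n a (A : 'M[C]_(m, n)) : adjm (a *: A) = conjc a *: adjm A.
Proof. by apply/matrixP=> i j; rewrite !mxE rmorphM. Qed.

Lemma adjm1 n : adjm (1%:M : 'M[C]_n) = 1%:M.
Proof. by apply/matrixP=> i j; rewrite !mxE conjc_nat eq_sym. Qed.

Lemma adjm_col_mx m1 m2 n (x : 'M[C]_(m1, n)) (y : 'M[C]_(m2, n)) :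
  adjm (col_mx x y) = row_mx (adjm x) (adjm y).
Proof. by rewrite /adjm map_col_mx tr_col_mx. Qed.

Lemma mulmx_adj_eq0 m n (Y : 'M[C]_(m, n)) : Y *m adjm Y = 0 -> Y = 0.
Proof.
move=> /matrixP Y0; apply/matrixP=> i j; rewrite mxE; apply/eqP.
have /eqP := Y0 i i; rewrite !mxE.
under eq_bigr do rewrite !mxE.
rewrite psumr_eq0; last by move=> k _; exact: mulcJ_ge0.
move=> /allP /(_ j (mem_index_enum _)) /implyP /(_ isT).
by rewrite mulf_eq0 conjc_eq0 orbb.
Qed.

Lemma adjm_mul_self_ge0 n (w : 'cV[C]_n) : 0 <= (adjm w *m w) 0 0.
Proof. by rewrite mxE; apply: sumr_ge0 => i _; rewrite !mxE mulrC mulcJ_ge0. Qed.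

Lemma adjm_mul_self_eq0 n (w : 'cV[C]_n) : (adjm w *m w) 0 0 = 0 -> w = 0.
Proof.
move=> w0; have aw0 : adjm w = 0.
  by apply: mulmx_adj_eq0; rewrite adjmK (mx11_scalar (_ *m _)) w0 -scalemx1 scale0r.
by rewrite -(adjmK w) aw0; apply/matrixP=> i j; rewrite !mxE conjc0.
Qed.

End ConjugateTranspose.

Section MoorePenrose.
Variable R : rcfType.
Local Notation C := R[i].

Lemma adjm_invmx n (K : 'M[C]_n) :
  K \in unitmx -> adjm K = K -> adjm (invmx K) = invmx K.
Proof.
move=> uK hK; rewrite -[LHS](mulmxK uK) -{2}hK -adjmM mulmxV // adjm1.
by rewrite mul1mx.
Qed.

Lemma unitmx_mul_adj r n (G : 'M[C]_(r, n)) : row_free G -> G *m adjm G \in unitmx.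
Proof.
move=> fG; rewrite -row_free_unit -kermx_eq0; apply/eqP; set a := kermx _.
have aK : a *m (G *m adjm G) = 0 by apply/eqP; rewrite -sub_kermx.
apply/eqP; rewrite -(mulmx_free_eq0 _ fG); apply/eqP/mulmx_adj_eq0.
by rewrite adjmM mulmxA -(mulmxA a) aK mul0mx.
Qed.

Lemma penrose_full_rank_factor n r (F : 'M[C]_(n, r)) (G : 'M[C]_(r, n)) :
  row_free (adjm F) -> row_free G ->
  let K1 := adjm F *m F in let K2 := G *m adjm G in
  penrose (F *m G) (adjm G *m invmx K2 *m invmx K1 *m adjm F).
Proof.
move=> fF fG K1 K2.
have u1 : K1 \in unitmx by rewrite /K1 -{2}(adjmK F) unitmx_mul_adj.
have u2 : K2 \in unitmx by rewrite /K2 unitmx_mul_adj.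
have h1 : adjm (invmx K1) = invmx K1 by rewrite adjm_invmx // /K1 adjmM adjmK.
have h2 : adjm (invmx K2) = invmx K2 by rewrite adjm_invmx // /K2 adjmM adjmK.
set P := adjm G *m _ *m _ *m _.
have XP : F *m G *m P = F *m invmx K1 *m adjm F.
  by rewrite !mulmxA -(mulmxA F G) -/K2 -(mulmxA F K2) (mulmxV u2) mulmx1.
have PX : P *m (F *m G) = adjm G *m invmx K2 *m G.
  by rewrite !mulmxA -(mulmxA _ (adjm F) F) -/K1 -(mulmxA _ (invmx K1) K1)
             (mulVmx u1) mulmx1.
split.
- by rewrite XP -!mulmxA (mulmxA (adjm F)) -/K1 (mulmxA (invmx K1)) (mulVmx u1) mul1mx.
- by rewrite PX /P -!mulmxA (mulmxA G) -/K2 (mulmxA (invmx K2)) (mulVmx u2) mul1mx.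
- by rewrite XP !adjmM adjmK h1 mulmxA.
- by rewrite PX !adjmM adjmK h2 mulmxA.
Qed.

Lemma mpinvP n (X : 'M[C]_n) : penrose X (mpinv X).
Proof.
apply: (epsilon_spec (inhabits 0) (penrose X)).
have fF : row_free (adjm (col_base X)).
  by rewrite /row_free /adjm mxrank_tr mxrank_map; exact: col_base_full.
have := penrose_full_rank_factor fF (row_base_free X).
by rewrite mulmx_base; exact: ex_intro.
Qed.

End MoorePenrose.

Section SchurComplement.
Variable R : rcfType.
Local Notation C := R[i].

Lemma qform_block_mx n1 n2 k (P : 'M[C]_n1) Q Q' (S : 'M[C]_n2)
    (x : 'M[C]_(n1, k)) (y : 'M[C]_(n2, k)) :
  adjm (col_mx x y) *m block_mx P Q Q' S *m col_mx x y =
  adjm x *m P *m x + adjm x *m Q *m y + adjm y *m Q' *m x + adjm y *m S *m y.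
Proof.
rewrite adjm_col_mx mul_row_block mul_row_col !mulmxDl.
by rewrite addrA -(addrA (_ *m x)) (addrC (_ *m Q' *m x)) !addrA.
Qed.

Lemma ge0_affine_eq0 (p s : C) : 0 <= s -> (forall k : R, 0 <= p - k%:C%C * s) -> s = 0.
Proof.
case: p s => [a b] [c d]; rewrite lecE /= => /andP[/eqP d0 c0] hk.
have {}hk k : 0 <= a - k * c by have := hk k; rewrite lecE /= => /andP[_]; rewrite d0; simpc.
suff c0' : c = 0 by rewrite c0' d0.
apply/eqP; rewrite eq_le c0 andbT leNgt; apply/negP => cpos.
by have := hk ((a + 1) / c); rewrite -mulrA mulVf ?gt_eqF //; lra.
Qed.

Lemma psdC_block_ker n1 n2 (P : 'M[C]_n1) Q (S : 'M[C]_n2) (y : 'cV[C]_n2) :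
  psdC (block_mx P Q (adjm Q) S) -> S *m y = 0 -> Q *m y = 0.
Proof.
move=> psdPS Sy0; set w := Q *m y; apply: adjm_mul_self_eq0.
apply: (ge0_affine_eq0 (p := (adjm w *m P *m w) 0 0)) => [|k].
  exact: adjm_mul_self_ge0.
have := psdPS (col_mx (- w) ((k / 2)%:C%C *: y)).
rewrite qform_block_mx !adjmN !adjmZ conjc_real !mulNmx !mulmxN opprK.
rewrite -!scalemxAl -!scalemxAr -(mulmxA (adjm y) S) Sy0 mulmx0 !scaler0 addr0.
rewrite -(mulmxA (adjm w) Q) -/w -adjmM -/w !mxE.
by rewrite -addrA -opprD -mulrDl -rmorphD /= -splitr.
Qed.

(* The kernel inclusion above gives [Q S^+ S = Q], which is what makes the
   pseudoinverse behave like an inverse in the usual completion of squares. *)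
Lemma psdC_schur n1 n2 (P : 'M[C]_n1) Q (S : 'M[C]_n2) :
  psdC (block_mx P Q (adjm Q) S) -> adjm S = S ->
  psdC (P - Q *m mpinv S *m adjm Q).
Proof.
move=> psdPS hS; set M := mpinv S; have [SMS _ _ _] := mpinvP S; rewrite -/M in SMS.
have QMS : Q *m M *m S = Q.
  have : Q *m (1%:M - M *m S) = 0.
    apply/matrixP => i j.
    have /matrixP/(_ i 0) : Q *m ((1%:M - M *m S) *m (delta_mx j 0 : 'cV_n2)) = 0.
      apply: psdC_block_ker psdPS _.
      by rewrite mulmxA mulmxBr mulmx1 mulmxA SMS subrr mul0mx.
    by rewrite mulmxA -colE !mxE.
  by rewrite mulmxBr mulmx1 mulmxA => /eqP; rewrite subr_eq0 => /eqP.
move=> x; set z := adjm M *m adjm Q *m x.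
have hz : adjm Q *m x = S *m z by rewrite /z -{1}QMS !adjmM hS !mulmxA.
have hz' : adjm x *m Q = adjm z *m S by rewrite -(adjmK Q) -adjmM hz adjmM hS.
clearbody z.
have := psdPS (col_mx x (- z)); rewrite qform_block_mx.
rewrite !adjmN !mulNmx !mulmxN opprK hz' -(mulmxA (adjm z) (adjm Q)) hz mulmxA.
suff -> : adjm x *m (P - Q *m M *m adjm Q) *m x =
          adjm x *m P *m x - adjm z *m S *m z by rewrite subrK.
rewrite mulmxBr mulmxBl !mulmxA hz' -(mulmxA _ (adjm Q) x) hz mulmxA.
by rewrite -(mulmxA (adjm z) S M) -(mulmxA (adjm z) (S *m M) S) SMS.
Qed.

End SchurComplement.

Section Complexification.
Variable R : rcfType.
Local Notation C := R[i].

Lemma cmxN m n (X : 'M[R]_(m, n)) : cmx (- X) = - cmx X.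
Proof. by rewrite /cmx map_mxN. Qed.

Lemma adjm_cmx m n (X : 'M[R]_(m, n)) : adjm (cmx X) = cmx X^T.
Proof. by apply/matrixP=> i j; rewrite !mxE conjc_real. Qed.

Lemma cmx_dsum m n (X : 'M[R]_m) (Y : 'M[R]_n) : cmx (dsum X Y) = dsum (cmx X) (cmx Y).
Proof. by rewrite /dsum /cmx map_block_mx !map_mx0. Qed.

Lemma cmx_submxK m1 m2 n1 n2 (X : 'M[R]_(m1 + m2, n1 + n2)) :
  cmx X = block_mx (cmx (ulsubmx X)) (cmx (ursubmx X)) (cmx (dlsubmx X)) (cmx (drsubmx X)).
Proof. by rewrite -{1}(submxK X) /cmx map_block_mx. Qed.

Lemma conjc_iC : conjc (iC R) = - iC R.
Proof. by apply/eqP; rewrite eq_complex /= oppr0 !eqxx. Qed.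

Lemma psdC_conj n (X : 'M[C]_n) : psdC X -> psdC (map_mx (@conjc R) X).
Proof.
move=> psdX v; rewrite -conj_ge0.
suff <- : (adjm (map_mx (@conjc R) v) *m X *m map_mx (@conjc R) v) 0 0 =
          conjc ((adjm v *m map_mx (@conjc R) X *m v) 0 0) by [].
have -> : forall M : 'M[C]_1, conjc (M 0 0) = map_mx (@conjc R) M 0 0 by move=> M; rewrite mxE.
rewrite !map_mxM.
by congr ((_ *m _ *m _) 0 0); apply/matrixP=> i j; rewrite !mxE //; exact/esym/conjcK.
Qed.

(* By complex conjugation, since [g] and [J] are real. *)
Lemma psdC_cmx_oppJ n (g J : 'M[R]_n) :
  psdC (cmx g - iC R *: cmx J) -> psdC (cmx g - iC R *: cmx (- J)).
Proof.
suff <- : map_mx (@conjc R) (cmx g - iC R *: cmx J) = cmx g - iC R *: cmx (- J).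
  exact: psdC_conj.
by apply/matrixP=> i j; apply/eqP; rewrite !mxE eq_complex /=; apply/andP; split; apply/eqP; ring.
Qed.

End Complexification.

Lemma det_mx2 (T : comNzRingType) (A : 'M[T]_2) : \det A = A 0 0 * A 1 1 - A 0 1 * A 1 0.
Proof.
rewrite (expand_det_row _ 0) !big_ord_recl big_ord0 /cofactor !det_mx11 !mxE /=.
rewrite expr0 mul1r expr1 addr0 mulN1r mulrN.
by congr (_ * A _ _ - A _ _ * A _ _); apply/val_inj.
Qed.

Lemma mxtrace2 (T : comNzRingType) (A : 'M[T]_2) : \tr A = A 0 0 + A 1 1.
Proof.
rewrite /mxtrace !big_ord_recl big_ord0 addr0.
by congr (_ + A _ _); apply/val_inj.
Qed.

Section TwoModes.
Variable R : rcfType.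
Local Notation C := R[i].

Lemma psdC2 (X : 'M[C]_2) : psdC X -> forall u v : C,
  0 <= conjc u * (X 0 0 * u + X 0 1 * v) + conjc v * (X 1 0 * u + X 1 1 * v).
Proof.
move=> psdX u v; have := psdX (\col_i (if i == 0 then u else v)).
rewrite !mxE !big_ord_recl !big_ord0 !mxE !big_ord_recl !big_ord0 !mxE /=.
have -> : lift ord0 ord0 = 1 :> 'I_2 by apply/val_inj.
by rewrite !addr0; congr (0 <= _); ring.
Qed.

Lemma psdC_pmJ1_tr_det (H : 'M[C]_2) :
  psdC (H - iC R *: cmx (J1 R)) -> psdC (H - iC R *: cmx (- J1 R)) ->
  2 <= \tr H /\ 0 < \det H.
Proof.
rewrite cmxN scalerN opprK => /psdC2 p1 /psdC2 p2; rewrite !mxE /= in p1 p2.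
rewrite mxtrace2 det_mx2; move: p1 p2; rewrite /iC.
move: (H 0 0) (H 0 1) (H 1 0) (H 1 1) => [a1 a2] [b1 b2] [c1 c2] [d1 d2] p1 p2.
(* The test vectors e1, e2, e1 + e2, e1 +- i e2 make H Hermitian with tr H >= 2;
   then (d, -conj c) and (-c, a), for c the off-diagonal entry of H -+ iJ1, show
   that d det(H -+ iJ1) and a det(H -+ iJ1) are nonnegative, so det H >= 1. *)
have := p1 1 0; simpc => /andP[/eqP q1 q2].
have := p1 0 1; simpc => /andP[/eqP q3 q4].
have := p1 1 1; simpc => /andP[/eqP q5 q6].
have := p1 1 (Complex 0 1); simpc => /andP[/eqP q7 q8].
have := p2 1 (Complex 0 (-1)); simpc => /andP[/eqP q9 q10].
have ea2 : a2 = 0 by lra.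
have ed2 : d2 = 0 by lra.
have ec1 : c1 = b1 by lra.
have ec2 : c2 = - b2 by lra.
subst a2 d2 c1 c2.
have := p1 (Complex d1 0) (- conjc (Complex b1 (b2 + 1))); simpc => /andP[_ r1].
have := p1 (- Complex b1 (b2 + 1)) (Complex a1 0); simpc => /andP[_ r2].
have := p2 (Complex d1 0) (- conjc (Complex b1 (b2 - 1))); simpc => /andP[_ r3].
have := p2 (- Complex b1 (b2 - 1)) (Complex a1 0); simpc => /andP[_ r4].
have ht : 2 <= a1 + d1 by lra.
have K1 : 0 <= a1 * d1 - b1 ^ 2 - (b2 + 1) ^ 2.
  by rewrite -(pmulr_rge0 _ (_ : 0 < a1 + d1)); lra.
have K2 : 0 <= a1 * d1 - b1 ^ 2 - (b2 - 1) ^ 2.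
  by rewrite -(pmulr_rge0 _ (_ : 0 < a1 + d1)); lra.
by split; apply/andP; split => //; nra.
Qed.

End TwoModes.

Section SymplecticForms.
Variable R : rcfType.

Lemma dsumT m n (X : 'M[R]_m) (Y : 'M[R]_n) : (dsum X Y)^T = dsum X^T Y^T.
Proof. by rewrite /dsum tr_block_mx !trmx0. Qed.

Lemma dsumN m n (X : 'M[R]_m) (Y : 'M[R]_n) : - dsum X Y = dsum (- X) (- Y).
Proof. by rewrite /dsum opp_block_mx !oppr0. Qed.

Lemma trmx_J1 : (J1 R)^T = - J1 R.
Proof.
apply/matrixP=> i j; rewrite !mxE.
by case: i => [[|[|i]] hi] //; case: j => [[|[|j]] hj] //=; rewrite ?oppr0 ?opprK.
Qed.

Lemma trmx_JBC : (JBC R)^T = - JBC R.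
Proof. by rewrite /JBC dsumT trmx_J1 dsumN. Qed.

Lemma trmx_JtBC : (JtBC R)^T = - JtBC R.
Proof. by rewrite /JtBC dsumT linearN /= trmx_J1 dsumN. Qed.

Lemma psdC_schur_dsum m n (g : 'M[R]_(m + n)) (JA : 'M[R]_m) (JB : 'M[R]_n) :
  g^T = g -> JB^T = - JB -> psdC (cmx g - iC R *: cmx (dsum JA JB)) ->
  psdC (cmx (ulsubmx g) -
        cmx (ursubmx g) *m mpinv (cmx (drsubmx g) - iC R *: cmx JB) *m cmx (ursubmx g)^T
        - iC R *: cmx JA).
Proof.
move=> sym_g skew_JB.
have -> : cmx g - iC R *: cmx (dsum JA JB) =
    block_mx (cmx (ulsubmx g) - iC R *: cmx JA) (cmx (ursubmx g))
             (adjm (cmx (ursubmx g))) (cmx (drsubmx g) - iC R *: cmx JB).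
  rewrite cmx_submxK cmx_dsum /dsum scale_block_mx !scaler0 opp_block_mx !oppr0.
  by rewrite add_block_mx !addr0 adjm_cmx trmx_ursub sym_g.
move=> /psdC_schur; rewrite addrAC adjm_cmx; apply.
rewrite adjmD adjmN adjmZ conjc_iC !adjm_cmx trmx_drsub sym_g skew_JB cmxN.
by rewrite scaleNr scalerN opprK.
Qed.

End SymplecticForms.

Theorem mainTheorem8 (R : rcfType) (g : 'M[R]_(2 + (2 + 2))) :
  isCM3 g -> PPT g -> fully_separable g ->
  [/\ 2 <= \tr (Nmat g), 2 <= \tr (Ntmat g), 0 < \det (Nmat g) & 0 < \det (Ntmat g)].
Proof.
move=> [sym_g _] ppt _.
have schur JA JB := @psdC_schur_dsum R 2 (2 + 2) g JA JB sym_g.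
have N_J1 : psdC (Nmat g - iC R *: cmx (J1 R)) := schur _ _ (trmx_JBC R) (ppt P0).
have N_mJ1 : psdC (Nmat g - iC R *: cmx (- J1 R)) := schur _ _ (trmx_JBC R) (ppt PA).
have Nt_J1 : psdC (Ntmat g - iC R *: cmx (J1 R)) := schur _ _ (trmx_JtBC R) (ppt PC).
have Nt_mJ1 : psdC (Ntmat g - iC R *: cmx (- J1 R)).
  apply: schur (trmx_JtBC R) _.
  have -> : dsum (- J1 R) (JtBC R) = - Jt R PB by rewrite /= !dsumN !opprK.
  exact: psdC_cmx_oppJ (ppt PB).
have [trN detN] := psdC_pmJ1_tr_det N_J1 N_mJ1.
have [trNt detNt] := psdC_pmJ1_tr_det Nt_J1 Nt_mJ1.
by split.
Qed.
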